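(* Let $\mathscr{O}$ be an operad in $\mathbbm{k}$-vector spaces ($\mathbbm{k}$ any field) and $\mu\in\mathscr{O}(2)$. The morphisms $\widetilde{\mu}_F(n):\delta F(n)\to F(n)$ (for $F\in\mathcal{F}_{\mathscr{O}}$, $n\in\mathbb{N}$) induce a natural transformation $\widetilde{\mu}:\delta\to\mathrm{Id}$ of endofunctors of $\mathcal{F}_{\mathscr{O}}$ if and only if $\mu$ satisfies the right Leibniz condition: for all $n\in\mathbb{N}$ and all $\nu\in\mathscr{O}(n)$, $$\mu\circ(\nu\boxplus\mathrm{Id}_1)=\nu\circ\mu(n)\quad\text{in } \mathbf{Cat}\,\mathscr{O}(n+1,1)=\mathscr{O}(n+1),$$ where $\mu(n):=\sum_{i=1}^n\mu_i(n)\in\mathbf{Cat}\,\mathscr{O}(n+1,n)$. Moreover, it suffices to check this condition for $\nu$ in a set of generators of the operad $\mathscr{O}$.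
   Context: $\mathbf{Cat}\,\mathscr{O}$ is the $\mathbbm{k}$-linear PROP associated to $\mathscr{O}$: objects $\mathbb{N}$, $\mathbf{Cat}\,\mathscr{O}(m,n)=\bigoplus_{f:\{1..m\}\to\{1..n\}}\bigotimes_{i=1}^n\mathscr{O}(|f^{-1}(i)|)$, symmetric monoidal structure $\boxplus$ given by addition on objects; elements of $\mathscr{O}(k)$ are viewed as morphisms in $\mathbf{Cat}\,\mathscr{O}(k,1)$. $\mathcal{F}_{\mathscr{O}}$ is the category of $\mathbbm{k}$-linear functors from $\mathbf{Cat}\,\mathscr{O}$ to $\mathbbm{k}$-vector spaces. $\delta:\mathcal{F}_{\mathscr{O}}\to\mathcal{F}_{\mathscr{O}}$ is precomposition with $(-)\boxplus 1$: $\delta F(n)=F(n+1)$, $\xi$ acting by $F(\xi\boxplus\mathrm{Id}_1)$. For $1\le i\le n$, $\mu_i(n)\in\mathbf{Cat}\,\mathscr{O}(n+1,n)$ is the element indexed by the map $\{1..n+1\}\to\{1..n\}$, $j\mapsto j$ for $j\le n$, $n+1\mapsto i$, with the identity of $\mathscr{O}(1)$ on singleton fibres and $\mu$ with first input $i$ and second input $n+1$ on the fibre over $i$. $\widetilde{\mu}_F(n):F(n+1)\to F(n)$ is $F(\mu(n))$. *)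

From HB Require Import structures.
From mathcomp Require Import all_boot all_order all_algebra.
Set Implicit Arguments. Unset Strict Implicit. Unset Printing Implicit Defensive.
Import GRing.Theory.
Local Open Scope ring_scope.

(* Finite ordinals {0,..,m-1} stand for {1,..,m}; maps are finite functions. *)
(* fib f i = |f^{-1}(i)|, fibres being ordered by the natural order.          *)
Definition fib m n (f : {ffun 'I_m -> 'I_n}) (i : 'I_n) : nat :=
  #|[pred x | f x == i]|.

(* Canonical transport O c -> O d along c = d (0 if c <> d; it is only ever  *)
(* used when c = d holds, to identify O(|fibre|) with O(its known size)).    *)
Definition coe (k : fieldType) (O : nat -> lmodType k) (c d : nat) (x : O c)
  : O d :=
  match c =P d with ReflectT e => eq_rect c O x d e | ReflectF _ => 0 end.
Arguments coe {k O c} d x.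

Definition compf m n p (g : {ffun 'I_n -> 'I_p}) (f : {ffun 'I_m -> 'I_n})
  : {ffun 'I_m -> 'I_p} := [ffun x => g (f x)].

Lemma fibmap_mem m n p (g : {ffun 'I_n -> 'I_p}) (f : {ffun 'I_m -> 'I_n})
  (j : 'I_p) (x : 'I_(fib (compf g f) j)) :
  f (enum_val x) \in [pred b | g b == j].
Proof. have := enum_valP x; by rewrite !inE ffunE. Qed.

(* The induced (order-preserving on fibres) map (g o f)^{-1}(j) -> g^{-1}(j). *)
Definition fibmap m n p (g : {ffun 'I_n -> 'I_p}) (f : {ffun 'I_m -> 'I_n})
  (j : 'I_p) : {ffun 'I_(fib (compf g f) j) -> 'I_(fib g j)} :=
  [ffun x => enum_rank_in (fibmap_mem x) (f (enum_val x))].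

Section OperadAxioms.
Variable k : fieldType.
Variable O : nat -> lmodType k.
Variable idO : O 1.
(* composition along a map f : m -> n : gam f mu (nu_i)_i is the composite  *)
(* mu o (nu_1, ..., nu_n) followed by the unshuffle permutation putting the  *)
(* inputs of nu_i at the positions f^{-1}(i) (natural order).               *)
Variable gam : forall m n (f : {ffun 'I_m -> 'I_n}),
  O n -> (forall i, O (fib f i)) -> O m.
Arguments gam {m n}.

Definition compnu m n p (g : {ffun 'I_n -> 'I_p}) (f : {ffun 'I_m -> 'I_n})
  (nu : forall i, O (fib f i)) (j : 'I_p) :
  forall y : 'I_(fib g j), O (fib (fibmap g f j) y) :=
  fun y => coe _ (nu (enum_val y)).

(* the component over j of the composite (g, mu) o (f, nu) in Cat O *)
Definition compfib m n p (g : {ffun 'I_n -> 'I_p}) (mu : forall j, O (fib g j))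
  (f : {ffun 'I_m -> 'I_n}) (nu : forall i, O (fib f i)) (j : 'I_p)
  : O (fib (compf g f) j) :=
  @gam _ _ (fibmap g f j) (mu j) (@compnu _ _ _ g f nu j).

Definition operad_axioms : Prop :=
  [/\
      (forall m n (f : {ffun 'I_m -> 'I_n}) (a : k) x y nu,
          gam f (a *: x + y) nu = a *: gam f x nu + gam f y nu),
      (forall m n (f : {ffun 'I_m -> 'I_n}) mu nu i (a : k) x y,
          gam f mu (dfwith nu (i := i) (a *: x + y))
          = a *: gam f mu (dfwith nu (i := i) x) + gam f mu (dfwith nu (i := i) y)),
      (forall n (mu : O n), gam [ffun x : 'I_n => x] mu (fun i => coe _ idO) = mu),
      (forall m (f : {ffun 'I_m -> 'I_1}) (nu : O m),
          gam f idO (fun i => coe _ nu) = nu) &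
      (forall m n p (f : {ffun 'I_m -> 'I_n}) (g : {ffun 'I_n -> 'I_p})
              (l : O p) (mu : forall j, O (fib g j)) (nu : forall i, O (fib f i)),
          gam f (gam g l mu) nu = gam (compf g f) l (compfib mu nu))].
End OperadAxioms.

(* A (symmetric) operad in k-vector spaces, presented by its compositions   *)
(* along all maps of finite ordinals (this encodes gamma and the Sigma_n-    *)
(* actions, the latter being composition along bijections with units).     *)
Record operad (k : fieldType) := Operad {
  ops : nat -> lmodType k;
  op_id : ops 1;
  op_comp : forall m n (f : {ffun 'I_m -> 'I_n}),
      ops n -> (forall i, ops (fib f i)) -> ops m;
  op_axioms : operad_axioms op_id op_comp }.

Section CatO.
Variable k : fieldType.
Variable O : operad k.

(* Elementary tensors of Cat O(m, n) = (+)_f (x)_i O(|f^{-1}(i)|):  a map f *)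
(* together with one element of O(|f^{-1}(i)|) for each i.  They span      *)
(* Cat O(m, n).                                                             *)
Record elm (m n : nat) := Elm {
  emap : {ffun 'I_m -> 'I_n};
  eten : forall i, ops O (fib emap i) }.

Definition ecomp m n p (e2 : elm n p) (e1 : elm m n) : elm m p :=
  @Elm m p (compf (emap e2) (emap e1))
    (compfib (@op_comp k O) (eten e2) (eten e1)).

Definition eid n : elm n n :=
  @Elm n n [ffun x => x] (fun i => coe _ (op_id O)).

Definition ebox1 m n (e : elm m n) : elm m.+1 n.+1 :=
  let F := [ffun x : 'I_m.+1 =>
              if unlift ord_max x is Some x' then lift ord_max (emap e x')
              else ord_max] in
  @Elm m.+1 n.+1 F
    (fun j => if unlift ord_max j is Some j' then coe _ (eten e j')
              else coe _ (op_id O)).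

Definition el_of n (x : ops O n) : elm n 1 :=
  @Elm n 1 [ffun _ => ord0] (fun i => coe _ x).

(* Cat O(m, 1) = O(m) *)
Definition val1 m (e : elm m 1) : ops O m := coe m (eten e ord0).

(* mu_i(n) in Cat O(n+1, n)  (i : 'I_n stands for i+1) *)
Definition mu_i (mu : ops O 2) n (i : 'I_n) : elm n.+1 n :=
  @Elm n.+1 n [ffun x : 'I_n.+1 => if unlift ord_max x is Some x' then x' else i]
    (fun j => if j == i then coe _ mu else coe _ (op_id O)).

(* k-linear functors Cat O -> k-vector spaces, given on the spanning        *)
(* elementary tensors (multilinear in the tensor factors).                  *)
Definition rep_axioms (obj : nat -> lmodType k)
  (act : forall m n, elm m n -> obj m -> obj n) : Prop :=
  let act := fun m n => @act m n in
  [/\ (forall m n (e : elm m n) (a : k) u v,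
          act _ _ e (a *: u + v) = a *: act _ _ e u + act _ _ e v),
      (forall m n (f : {ffun 'I_m -> 'I_n}) (nu : forall i, ops O (fib f i))
              i (a : k) x y w,
          act _ _ (Elm (dfwith nu (i := i) (a *: x + y))) w
          = a *: act _ _ (Elm (dfwith nu (i := i) x)) w
            + act _ _ (Elm (dfwith nu (i := i) y)) w),
      (forall n v, act _ _ (eid n) v = v) &
      (forall m n p (e2 : elm n p) (e1 : elm m n) v,
          act _ _ (ecomp e2 e1) v = act _ _ e2 (act _ _ e1 v))].

Record rep := Rep {
  robj : nat -> lmodType k;
  ract : forall m n, elm m n -> robj m -> robj n;
  rep_ax : rep_axioms ract }.
Arguments ract r {m n}.

Definition rep_hom (F G : rep) (al : forall n, robj F n -> robj G n) : Prop :=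
  (forall n (a : k) u v, al n (a *: u + v) = a *: al n u + al n v) /\
  (forall m n (e : elm m n) v, al n (ract F e v) = ract G e (al m v)).

Definition mutilde (mu : ops O 2) (F : rep) n (v : robj F n.+1) : robj F n :=
  \sum_(i < n) ract F (mu_i mu i) v.

Definition mutilde_natural (mu : ops O 2) : Prop :=
  (forall (F : rep) m n (e : elm m n) (v : robj F m.+1),
      mutilde mu (ract F (ebox1 e) v) = ract F e (mutilde mu v)) /\
  (forall (F G : rep) (al : forall n, robj F n -> robj G n),
      rep_hom al -> forall n (v : robj F n.+1),
      al n (mutilde mu v) = mutilde mu (al n.+1 v)).

Definition leibniz_at (mu : ops O 2) n (nu : ops O n) : Prop :=
  val1 (ecomp (el_of mu) (ebox1 (el_of nu)))
  = \sum_(i < n) val1 (ecomp (el_of nu) (mu_i mu i)).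

Definition leibniz (mu : ops O 2) : Prop :=
  forall n (nu : ops O n), leibniz_at mu nu.

(* S generates O: the smallest sub-operad (sub-k-vector spaces closed under *)
(* all compositions, hence also under Sigma_n-actions, containing the unit) *)
(* containing S is O.                                                       *)
Definition generates (S : forall n, ops O n -> Prop) : Prop :=
  forall P : forall n, ops O n -> Prop,
    (forall n x, S n x -> P n x) ->
    P 1 (op_id O) ->
    (forall n, P n 0) ->
    (forall n (a : k) x y, P n x -> P n y -> P n (a *: x + y)) ->
    (forall m n (f : {ffun 'I_m -> 'I_n}) mu nu,
        P n mu -> (forall i, P (fib f i) (nu i)) -> P m (@op_comp k O m n f mu nu)) ->
    forall n x, P n x.
End CatO.

(* For an elementary tensor xi = (f, (nu_j)_j) of Cat O(m, n), composing with mu on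
   either side only changes one tensor factor:
     mu_i(n) o (xi [+] Id_1) is xi with nu_i replaced by mu o (nu_i [+] Id_1), and
     xi o mu_x(m) is xi with nu_(f x) replaced by nu_(f x) o mu_r(|f^-1(f x)|),
   where r is the rank of x in its fibre.  Summing over i, and over x fibre by fibre,
   the naturality square of mu~ at xi becomes the sum over j of the Leibniz identities
   for the nu_j; naturality in F is just linearity of morphisms of F_O.  Conversely,
   in the representation p |-> Hom_k(O(p), O(n+1)), xi |-> (- o xi)^*, the naturality
   square at nu in O(n), applied to the identity and evaluated at Id in O(1), is the
   Leibniz identity for nu.  Finally the nu satisfying the Leibniz identity form a
   sub-operad: they form a subspace containing Id, and since
   (nu o (nu_j)_j) [+] Id_1 = (nu [+] Id_1) o ((nu_j)_j [+] Id_1), the same naturality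
   square in that representation gives closure under composition. *)

From Pilot Require Import Defs.
From HB Require Import structures.
From mathcomp Require Import all_boot all_order all_algebra.
From mathcomp Require Import boolp.
Set Implicit Arguments. Unset Strict Implicit. Unset Printing Implicit Defensive.
Import GRing.Theory.

Lemma val_enum_val N (A : {pred 'I_N}) (y : 'I_#|A|) :
  val (enum_val y) = nth 0 (map val (enum A)) y.
Proof. by rewrite (enum_val_nth (enum_val y)) (nth_map (enum_val y)) // -cardE. Qed.

Lemma map_val_enum N (A : {pred 'I_N}) (P : pred nat) :
  (forall x : 'I_N, (x \in A) = P (val x)) ->
  map val (enum A) = filter P (iota 0 N).
Proof.
move=> AP; rewrite /enum_mem -enumT -val_enum_ord filter_map.
by congr map; apply: eq_filter => x /=; apply: AP.
Qed.

Lemma bump_ord n (x : 'I_n) : bump n x = x.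
Proof. by rewrite /bump leqNgt ltn_ord. Qed.

Section EnumFull.
Variables (N : nat) (A : {pred 'I_N}).
Hypothesis A_full : forall x, x \in A.

Lemma card_full : #|A| = N.
Proof. by rewrite -[RHS]card_ord; apply: eq_card. Qed.

Lemma val_enum_val_full (y : 'I_#|A|) : val (enum_val y) = val y.
Proof.
have ltyN : val y < N by have := ltn_ord y; rewrite {2}card_full.
by rewrite val_enum_val (@map_val_enum _ _ predT) ?filter_predT // nth_iota.
Qed.
End EnumFull.

Section EnumLift.
Variables (m : nat) (A : {pred 'I_m.+1}) (B : {pred 'I_m}) (b : bool).
Hypothesis A_lift : forall x, (lift ord_max x \in A) = (x \in B).
Hypothesis A_max : (ord_max \in A) = b.

Let P (v : nat) := if insub v is Some x then x \in B else false.

Lemma map_val_enum_lift :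
  map val (enum A) = map val (enum B) ++ (if b then [:: m] else [::]).
Proof.
rewrite (@map_val_enum _ B P); last by move=> x; rewrite /P valK.
rewrite (@map_val_enum _ A (fun v => if v < m then P v else (v == m) && b)).
  rewrite -addn1 iotaD filter_cat add0n /= ltnn eqxx.
  congr (_ ++ _).
  by apply: eq_in_filter => v; rewrite mem_iota add0n => /andP[_ ->].
move=> x; case: (unliftP ord_max x) => [x'|] ->; last by rewrite A_max /= ltnn eqxx.
by rewrite A_lift /= bump_ord ltn_ord /P valK.
Qed.

Lemma card_lift : #|A| = (#|B| + b)%N.
Proof.
by rewrite !cardE -(size_map val (enum A)) map_val_enum_lift size_cat size_map; case: b.
Qed.

Lemma enum_val_lift (y : 'I_#|A|) (y' : 'I_#|B|) :
  val y = val y' -> enum_val y = lift ord_max (enum_val y').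
Proof.
move=> yy'; apply: val_inj; rewrite /= bump_ord !val_enum_val map_val_enum_lift yy'.
by rewrite nth_cat size_map -cardE ltn_ord.
Qed.

Lemma enum_val_max (y : 'I_#|A|) : #|B| <= y -> enum_val y = ord_max.
Proof.
move=> leBy; have ltyA : val y < #|B| + b by rewrite -card_lift ltn_ord.
case bT: b ltyA => [|]; last by rewrite addn0 ltnNge leBy.
rewrite addn1 ltnS => leyB; have eyB : val y = #|B| by apply/eqP; rewrite eqn_leq leyB.
apply: val_inj; rewrite val_enum_val map_val_enum_lift nth_cat size_map -cardE eyB.
by rewrite ltnn subnn bT.
Qed.
End EnumLift.

(* The underlying maps of [ebox1 e] and [mu_i mu i]; [ord_max] is the new last input. *)
Definition boxmap m n (f : {ffun 'I_m -> 'I_n}) : {ffun 'I_m.+1 -> 'I_n.+1} :=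
  [ffun x => if unlift ord_max x is Some x' then lift ord_max (f x') else ord_max].

Definition mumap n (i : 'I_n) : {ffun 'I_n.+1 -> 'I_n} :=
  [ffun x => if unlift ord_max x is Some x' then x' else i].

Definition const0 n : {ffun 'I_n -> 'I_1} := [ffun => ord0].

Definition extmap m n (f : {ffun 'I_m -> 'I_n}) (i : 'I_n) : {ffun 'I_m.+1 -> 'I_n} :=
  [ffun x => if unlift ord_max x is Some x' then f x' else i].

Lemma extmapE m n (f : {ffun 'I_m -> 'I_n}) (h : {ffun 'I_m.+1 -> 'I_n}) i :
  (forall x, h (lift ord_max x) = f x) -> h ord_max = i -> h = extmap f i.
Proof.
move=> h_lift h_max; apply/ffunP => x; rewrite ffunE.
by case: (unliftP ord_max x) => [x'|] ->.
Qed.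

Lemma compfE m n p (g : {ffun 'I_n -> 'I_p}) (f : {ffun 'I_m -> 'I_n}) x :
  compf g f x = g (f x).
Proof. exact: ffunE. Qed.

Lemma boxmap_lift m n (f : {ffun 'I_m -> 'I_n}) x : boxmap f (lift ord_max x) = lift ord_max (f x).
Proof. by rewrite ffunE liftK. Qed.

Lemma boxmap_max m n (f : {ffun 'I_m -> 'I_n}) : boxmap f ord_max = ord_max.
Proof. by rewrite ffunE unlift_none. Qed.

Lemma mumap_lift n (i : 'I_n) x : mumap i (lift ord_max x) = x.
Proof. by rewrite ffunE liftK. Qed.

Lemma mumap_max n (i : 'I_n) : mumap i ord_max = i.
Proof. by rewrite ffunE unlift_none. Qed.

Lemma mem_fib_to1 n (c : {ffun 'I_n -> 'I_1}) j x : x \in [pred y | c y == j].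
Proof. by rewrite inE !ord1. Qed.

Lemma fib_to1 n (c : {ffun 'I_n -> 'I_1}) j : fib c j = n.
Proof. exact: card_full (mem_fib_to1 c j). Qed.

Lemma fib_idmap n (j : 'I_n) : fib [ffun x => x] j = 1%N.
Proof. by rewrite /fib -(card1 j); apply: eq_card => x; rewrite !inE ffunE. Qed.

Lemma fib_extend m n (f : {ffun 'I_m -> 'I_n}) (h : {ffun 'I_m.+1 -> 'I_n}) i j :
  (forall x, h (lift ord_max x) = f x) -> h ord_max = i ->
  fib h j = (fib f j + (i == j))%N.
Proof.
move=> hf hi; rewrite /fib; apply: card_lift => [x|]; by rewrite !inE ?hf ?hi.
Qed.

Lemma fib_mumap n (i j : 'I_n) : fib (mumap i) j = (1 + (i == j))%N.
Proof.
rewrite (@fib_extend _ _ [ffun x => x] _ i) ?fib_idmap ?mumap_max // => x.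
by rewrite mumap_lift ffunE.
Qed.

Section Extension.
Variables (m n : nat) (f : {ffun 'I_m -> 'I_n}) (h : {ffun 'I_m.+1 -> 'I_n}) (i : 'I_n).
Hypotheses (h_lift : forall x, h (lift ord_max x) = f x) (h_max : h ord_max = i).

Let fib_lift j x : (lift ord_max x \in [pred y | h y == j]) = (x \in [pred y | f y == j]).
Proof. by rewrite !inE h_lift. Qed.

Let fib_max j : (ord_max \in [pred y | h y == j]) = (i == j).
Proof. by rewrite inE h_max. Qed.

Lemma enum_val_extend_lift j (y : 'I_(fib h j)) (y' : 'I_(fib f j)) :
  val y = val y' -> enum_val y = lift ord_max (enum_val y').
Proof. exact: enum_val_lift (fib_lift j) (fib_max j) y y'. Qed.

Lemma enum_val_extend_max j (y : 'I_(fib h j)) : fib f j <= y -> enum_val y = ord_max.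
Proof. exact: enum_val_max (fib_lift j) (fib_max j) y. Qed.
End Extension.

Lemma enum_val_idmap n (j : 'I_n) (y : 'I_(fib [ffun x => x] j)) : enum_val y = j.
Proof. by apply/eqP; have := enum_valP y; rewrite inE ffunE. Qed.

Lemma enum_val_to1 n (c : {ffun 'I_n -> 'I_1}) j (y : 'I_(fib c j)) :
  enum_val y = cast_ord (fib_to1 c j) y.
Proof. by apply: val_inj; rewrite /= (val_enum_val_full (mem_fib_to1 c j)). Qed.

Section Mumap.
Variables (n : nat) (i j : 'I_n).

Let mumap_lift' x : mumap i (lift ord_max x) = [ffun y => y] x.
Proof. by rewrite mumap_lift ffunE. Qed.

Lemma enum_val_mumap_lift (y : 'I_(fib (mumap i) j)) :
  val y = 0%N -> enum_val y = lift ord_max j.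
Proof.
move=> y0; have lt01 : (0 < fib [ffun y => y] j)%N by rewrite fib_idmap.
rewrite (@enum_val_extend_lift _ _ _ _ _ mumap_lift' (mumap_max i) _ _ (Ordinal lt01)) //.
by rewrite enum_val_idmap.
Qed.

Lemma enum_val_mumap_max (y : 'I_(fib (mumap i) j)) : (0 < val y)%N -> enum_val y = ord_max.
Proof.
by move=> y_gt0; apply: (enum_val_extend_max mumap_lift' (mumap_max i)); rewrite fib_idmap.
Qed.
End Mumap.

Section BoxLike.
Variables (m n : nat) (f : {ffun 'I_m -> 'I_n}) (h : {ffun 'I_m.+1 -> 'I_n.+1}).
Hypotheses (h_lift : forall x, h (lift ord_max x) = lift ord_max (f x))
  (h_max : h ord_max = ord_max).

Let fib_lift j x :
  (lift ord_max x \in [pred y | h y == lift ord_max j]) = (x \in [pred y | f y == j]).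
Proof. by rewrite !inE h_lift (inj_eq lift_inj). Qed.

Let fib_lift_max j : (ord_max \in [pred y | h y == lift ord_max j]) = false.
Proof. by rewrite inE h_max eq_sym lift_eqF. Qed.

Lemma fib_box z : fib h z = if unlift ord_max z is Some j then fib f j else 1%N.
Proof.
case: unliftP => [j|] ->; first by rewrite /fib (card_lift (fib_lift j) (fib_lift_max j)) addn0.
rewrite /fib (@card_lift _ _ pred0 true) ?card0 // => [x|].
  by rewrite !inE h_lift lift_eqF.
by rewrite inE h_max eqxx.
Qed.

Lemma enum_val_box_lift j (y : 'I_(fib h (lift ord_max j))) (y' : 'I_(fib f j)) :
  val y = val y' -> enum_val y = lift ord_max (enum_val y').
Proof. exact: enum_val_lift (fib_lift j) (fib_lift_max j) y y'. Qed.

Lemma enum_val_box_max (y : 'I_(fib h ord_max)) : enum_val y = ord_max.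
Proof.
case: (unliftP ord_max (enum_val y)) => [x|//] ex.
by have := enum_valP y; rewrite inE ex h_lift lift_eqF.
Qed.
End BoxLike.

Lemma fib_boxmap m n (f : {ffun 'I_m -> 'I_n}) z :
  fib (boxmap f) z = if unlift ord_max z is Some j then fib f j else 1%N.
Proof. exact: fib_box (boxmap_lift f) (boxmap_max f) z. Qed.

Local Open Scope ring_scope.

Section LinearMaps.
Variables (k : fieldType) (U V : lmodType k) (A : U -> V).
Hypothesis A_lin : forall a x y, A (a *: x + y) = a *: A x + A y.

Lemma lin_add : {morph A : x y / x + y}.
Proof. by move=> x y; rewrite -[x]scale1r A_lin !scale1r. Qed.

Lemma lin0 : A 0 = 0.
Proof. by apply: (addrI (A 0)); rewrite -lin_add !addr0. Qed.

Lemma lin_sum (I : finType) (F : I -> U) : A (\sum_(i : I) F i) = \sum_(i : I) A (F i).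
Proof. exact: (big_morph A lin_add lin0). Qed.
End LinearMaps.

Section Coe.
Variables (k : fieldType) (O : nat -> lmodType k).

Lemma coe_id c (x : O c) : coe c x = x.
Proof. by rewrite /coe; case: eqP => // e; rewrite eq_axiomK. Qed.

Lemma coeK b c d (x : O b) : b = c -> coe d (coe c x) = coe d x.
Proof. by move=> bc; subst c; rewrite coe_id. Qed.

Lemma coe_linear c d (a : k) (x y : O c) : coe d (a *: x + y) = a *: coe d x + coe d y.
Proof. by rewrite /coe; case: eqP => [cd|_]; [subst d | rewrite scaler0 addr0]. Qed.
End Coe.

Lemma enum_val_fibmap m n p (g : {ffun 'I_n -> 'I_p}) (f : {ffun 'I_m -> 'I_n}) j y :
  enum_val (fibmap g f j y) = f (enum_val y).
Proof. by rewrite ffunE enum_rankK_in // fibmap_mem. Qed.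

Lemma fib_fibmap m n p (g : {ffun 'I_n -> 'I_p}) (f : {ffun 'I_m -> 'I_n}) j y :
  fib (fibmap g f j) y = fib f (enum_val y).
Proof.
rewrite /fib -(card_imset _ enum_val_inj); apply: eq_card => x.
rewrite !inE; apply/imsetP/eqP => [[x' + ->]|fxy].
  by rewrite inE => /eqP <-; rewrite enum_val_fibmap.
have gfx : x \in [pred x | compf g f x == j].
  by rewrite inE ffunE fxy; have := enum_valP y; rewrite inE.
exists (enum_rank_in gfx x); last by rewrite enum_rankK_in.
by rewrite inE; apply/eqP/enum_val_inj; rewrite enum_val_fibmap enum_rankK_in.
Qed.

Lemma fibmap_eq m n p (g : {ffun 'I_n -> 'I_p}) (f : {ffun 'I_m -> 'I_n}) j y y' :
  enum_val y' = f (enum_val y) -> fibmap g f j y = y'.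
Proof. by move=> ey'; apply: enum_val_inj; rewrite enum_val_fibmap. Qed.

Section Operad.
Variables (k : fieldType) (O : operad k).
Local Notation gam f := (@op_comp k O _ _ f).

Lemma op_comp_linearl m n (f : {ffun 'I_m -> 'I_n}) (a : k) x y nu :
  gam f (a *: x + y) nu = a *: gam f x nu + gam f y nu.
Proof. by case: (op_axioms O) => H *; apply: H. Qed.

Lemma op_comp_linearr m n (f : {ffun 'I_m -> 'I_n}) mu nu i (a : k) x y :
  gam f mu (dfwith nu (i := i) (a *: x + y))
  = a *: gam f mu (dfwith nu (i := i) x) + gam f mu (dfwith nu (i := i) y).
Proof. by case: (op_axioms O) => _ H *; apply: H. Qed.

Lemma op_comp_unitr n (mu : ops O n) :
  gam [ffun x => x] mu (fun i => coe _ (op_id O)) = mu.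
Proof. by case: (op_axioms O) => _ _ H *; apply: H. Qed.

Lemma op_comp_unitl m (f : {ffun 'I_m -> 'I_1}) (nu : ops O m) :
  gam f (op_id O) (fun i => coe _ nu) = nu.
Proof. by case: (op_axioms O) => _ _ _ H *; apply: H. Qed.

Lemma op_compA m n p (f : {ffun 'I_m -> 'I_n}) (g : {ffun 'I_n -> 'I_p})
  (l : ops O p) (mu : forall j, ops O (fib g j)) (nu : forall i, ops O (fib f i)) :
  gam f (gam g l mu) nu = gam (compf g f) l (compfib (@op_comp k O) mu nu).
Proof. by case: (op_axioms O) => _ _ _ _ H *; apply: H. Qed.

Lemma coe_op_comp m n m' n' (em : m = m') (en : n = n') (f : {ffun 'I_m -> 'I_n})
  (f' : {ffun 'I_m' -> 'I_n'}) (x : ops O n) (nu : forall i, ops O (fib f i))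
  (nu' : forall i, ops O (fib f' i)) :
  (forall a, f' (cast_ord em a) = cast_ord en (f a)) ->
  (forall b, nu' (cast_ord en b) = coe _ (nu b)) ->
  coe m' (gam f x nu) = gam f' (coe n' x) nu'.
Proof.
subst m' n' => ff' nunu'; rewrite !coe_id.
have ef : f' = f by apply/ffunP => a; rewrite -[a]cast_ord_id ff' !cast_ord_id.
subst f'; congr (gam _ _ _); apply: functional_extensionality_dep => b.
by have := nunu' b; rewrite cast_ord_id coe_id.
Qed.

Lemma coe_op_comp_dom m m' n (em : m = m') (f : {ffun 'I_m -> 'I_n})
  (f' : {ffun 'I_m' -> 'I_n}) (x : ops O n) (nu : forall i, ops O (fib f i))
  (nu' : forall i, ops O (fib f' i)) :
  (forall a, f' (cast_ord em a) = f a) -> (forall b, nu' b = coe _ (nu b)) ->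
  coe m' (gam f x nu) = gam f' x nu'.
Proof.
move=> ff' nunu'; rewrite -[in RHS](coe_id x).
by apply: (@coe_op_comp _ _ _ _ em (erefl n)) => [a|b]; rewrite cast_ord_id.
Qed.

Lemma elm_eq m n (h h' : {ffun 'I_m -> 'I_n}) (t : forall i, ops O (fib h i))
  (t' : forall i, ops O (fib h' i)) :
  h = h' -> (forall j, t' j = coe _ (t j)) -> Elm t = Elm t'.
Proof.
move=> hh'; subst h' => tt'; congr Elm.
by apply: functional_extensionality_dep => j; rewrite tt' coe_id.
Qed.

Definition ocomp p q (y : ops O q) (e : elm O p q) : ops O p := Defs.val1 (ecomp (el_of y) e).

Lemma ocomp_Elm m n (h : {ffun 'I_m -> 'I_n}) (t : forall i, ops O (fib h i)) (y : ops O n) :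
  ocomp y (Elm t) = gam h y t.
Proof.
rewrite /ocomp /Defs.val1 /= /compfib.
have fibn : fib (const0 n) ord0 = n by apply: fib_to1.
have fibm : fib (compf (const0 n) h) ord0 = m by apply: fib_to1.
rewrite (@coe_op_comp _ _ _ _ fibm fibn _ h _ _ t) ?coeK ?coe_id // => [a|b].
  apply: val_inj; rewrite /= -(val_enum_val_full (mem_fib_to1 _ _)) enum_val_fibmap.
  by congr (val (h _)); apply: val_inj; rewrite /= (val_enum_val_full (mem_fib_to1 _ _)).
have -> : cast_ord fibn b = enum_val b.
  by apply: val_inj; rewrite /= (val_enum_val_full (mem_fib_to1 _ _)).
by rewrite /compnu coeK ?fib_fibmap // coe_id.
Qed.
Lemma ocompE m n (e : elm O m n) y : ocomp y e = op_comp y (eten e).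
Proof. by case: e => h t; apply: ocomp_Elm. Qed.

Lemma ocomp_linear m n (e : elm O m n) (a : k) y z :
  ocomp (a *: y + z) e = a *: ocomp y e + ocomp z e.
Proof. by case: e => h t; rewrite !ocomp_Elm op_comp_linearl. Qed.

Lemma ocompA m n p (e2 : elm O n p) (e1 : elm O m n) y :
  ocomp y (ecomp e2 e1) = ocomp (ocomp y e2) e1.
Proof. by rewrite !ocompE op_compA. Qed.

Lemma ocomp_el_of n (y : ops O n) : ocomp (op_id O) (el_of y) = y.
Proof. by rewrite ocomp_Elm op_comp_unitl. Qed.
End Operad.

Section Composites.
Variables (k : fieldType) (O : operad k) (mu : ops O 2).
Local Notation gam f := (@op_comp k O _ _ f).

Definition mu_o_box n (nu : ops O n) : ops O n.+1 := ocomp mu (ebox1 (el_of nu)).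

Definition nu_o_mu_i n (nu : ops O n) (i : 'I_n) : ops O n.+1 := ocomp nu (mu_i mu i).

Lemma leibniz_atE p (x : ops O p) :
  leibniz_at mu x <-> mu_o_box x = \sum_(i < p) nu_o_mu_i x i.
Proof. by []. Qed.

Variables (m n : nat) (f : {ffun 'I_m -> 'I_n}) (nu : forall i, ops O (fib f i)).

Definition elm_replace i (x : ops O (fib f i).+1) : elm O m.+1 n :=
  Elm (dfwith (fun j => coe (fib (extmap f i) j) (nu j)) (i := i) (coe _ x)).

Section MuAfterBox.
Variable i : 'I_n.

Let h := compf (mumap i) (boxmap f).

Lemma compf_mumap_boxmap_lift x : h (lift ord_max x) = f x.
Proof. by rewrite compfE boxmap_lift mumap_lift. Qed.

Lemma compf_mumap_boxmap_max : h ord_max = i.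
Proof. by rewrite compfE boxmap_max mumap_max. Qed.

Let hL := compf_mumap_boxmap_lift.
Let hM := compf_mumap_boxmap_max.

Lemma compfib_mu_i_box_at :
  compfib (@op_comp k O) (eten (mu_i mu i)) (eten (ebox1 (Elm nu))) i
  = coe _ (mu_o_box (nu i)).
Proof.
have em : (fib f i).+1 = fib h i by rewrite (fib_extend _ hL hM) eqxx addn1.
have en : 2%N = fib (mumap i) i by rewrite fib_mumap eqxx.
rewrite /compfib /= eqxx /mu_o_box ocompE; symmetry.
apply: (@coe_op_comp _ _ _ _ _ _ em en (boxmap (const0 _)) (fibmap (mumap i) (boxmap f) i)).
  move=> a; apply: fibmap_eq; case: (unliftP ord_max a) => [a'|] ->.
    have ea' : val (cast_ord em (lift ord_max a')) = val a' by rewrite /= bump_ord.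
    rewrite (enum_val_extend_lift hL hM ea') !boxmap_lift enum_val_mumap_lift.
      by congr lift; apply/esym/eqP/(enum_valP a').
    by rewrite /= bump_ord [const0 _ _]ord1.
  by rewrite boxmap_max enum_val_mumap_max // (enum_val_extend_max hL hM) ?boxmap_max.
move=> b; rewrite /compnu; case: (unliftP ord_max b) => [b'|] -> /=.
  rewrite enum_val_mumap_lift ?liftK; last by rewrite /= bump_ord [b']ord1.
  by rewrite !coeK ?fib_boxmap ?liftK ?fib_to1.
by rewrite enum_val_mumap_max ?unlift_none // !coeK // fib_boxmap unlift_none.
Qed.

Lemma compfib_mu_i_box_off j : j != i ->
  compfib (@op_comp k O) (eten (mu_i mu i)) (eten (ebox1 (Elm nu))) j = coe _ (nu j).
Proof.
move=> ji; have em : fib f j = fib h j by rewrite (fib_extend _ hL hM) eq_sym (negbTE ji) addn0.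
have en : 1%N = fib (mumap i) j by rewrite fib_mumap eq_sym (negbTE ji).
rewrite /compfib /= (negbTE ji) -[in RHS](op_comp_unitl (const0 (fib f j)) (nu j)); symmetry.
apply: (@coe_op_comp _ _ _ _ _ _ em en (const0 _) (fibmap (mumap i) (boxmap f) j)).
  move=> a; apply: fibmap_eq; rewrite enum_val_mumap_lift; last by rewrite /= [const0 _ _]ord1.
  rewrite (@enum_val_extend_lift _ _ _ _ _ hL hM _ _ a) // boxmap_lift.
  by congr lift; apply/esym/eqP/(enum_valP a).
move=> b; rewrite /compnu enum_val_mumap_lift; last by rewrite /= [b]ord1.
by rewrite liftK !coeK ?fib_boxmap ?liftK ?fib_to1.
Qed.
End MuAfterBox.

Lemma ecomp_mu_i_ebox1 i :
  ecomp (mu_i mu i) (ebox1 (Elm nu)) = elm_replace (mu_o_box (nu i)).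
Proof.
have fibE := fib_extend _ (compf_mumap_boxmap_lift i) (compf_mumap_boxmap_max i).
apply: elm_eq => [|j]; first exact: extmapE (compf_mumap_boxmap_lift i) (compf_mumap_boxmap_max i).
have [->|ji] := eqVneq j i.
  by rewrite dfwith_in compfib_mu_i_box_at [RHS]coeK // fibE eqxx addn1.
rewrite dfwith_out 1?eq_sym // compfib_mu_i_box_off // [RHS]coeK //.
by rewrite fibE eq_sym (negbTE ji) addn0.
Qed.

Lemma mem_fib_self (x : 'I_m) : x \in [pred y | f y == f x].
Proof. by rewrite inE. Qed.

Definition fib_rank (x : 'I_m) : 'I_(fib f (f x)) := enum_rank_in (mem_fib_self x) x.

Section NuAfterMu.
Variable i : 'I_m.

Let h := compf f (mumap i).

Lemma compf_mumap_lift x : h (lift ord_max x) = f x.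
Proof. by rewrite compfE mumap_lift. Qed.

Lemma compf_mumap_max : h ord_max = f i.
Proof. by rewrite compfE mumap_max. Qed.

Lemma compfib_mu_i_at :
  compfib (@op_comp k O) nu (eten (mu_i mu i)) (f i) = coe _ (nu_o_mu_i (nu (f i)) (fib_rank i)).
Proof.
have em : (fib f (f i)).+1 = fib h (f i).
  by rewrite (fib_extend _ compf_mumap_lift compf_mumap_max) eqxx addn1.
have ei : enum_val (fib_rank i) = i by rewrite enum_rankK_in ?mem_fib_self.
rewrite /compfib /nu_o_mu_i ocompE; symmetry.
apply: (@coe_op_comp_dom _ _ _ _ _ em (mumap (fib_rank i)) (fibmap f (mumap i) (f i))).
  move=> a; apply: fibmap_eq; case: (unliftP ord_max a) => [a'|] ->.
    have ea' : val (cast_ord em (lift ord_max a')) = val a' by rewrite /= bump_ord.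
    by rewrite (enum_val_extend_lift compf_mumap_lift compf_mumap_max ea') !mumap_lift.
  by rewrite (enum_val_extend_max compf_mumap_lift compf_mumap_max) ?mumap_max.
move=> b; rewrite /compnu /=.
have ebi : (enum_val b == i) = (b == fib_rank i).
  by apply/eqP/eqP => [eb|->//]; apply: enum_val_inj; rewrite eb ei.
by rewrite ebi; case: ifP => bi; rewrite !coeK // fib_mumap eq_sym ?ebi bi.
Qed.

Lemma compfib_mu_i_off j : j != f i ->
  compfib (@op_comp k O) nu (eten (mu_i mu i)) j = coe _ (nu j).
Proof.
move=> jfi; have em : fib f j = fib h j.
  by rewrite (fib_extend _ compf_mumap_lift compf_mumap_max) eq_sym (negbTE jfi) addn0.
rewrite /compfib -[in RHS](op_comp_unitr (nu j)); symmetry.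
apply: (@coe_op_comp_dom _ _ _ _ _ em [ffun x => x] (fibmap f (mumap i) j)).
  move=> a; apply: fibmap_eq.
  rewrite ffunE (@enum_val_extend_lift _ _ _ _ _ compf_mumap_lift compf_mumap_max _ _ a) //.
  by rewrite mumap_lift.
move=> b; rewrite /compnu /=.
have ebi : (enum_val b == i) = false.
  by apply/eqP => ebi; have := enum_valP b; rewrite inE ebi eq_sym (negbTE jfi).
by rewrite ebi !coeK // ?fib_idmap // fib_mumap eq_sym ebi.
Qed.
End NuAfterMu.

Lemma ecomp_Elm_mu_i i :
  ecomp (Elm nu) (mu_i mu i) = elm_replace (nu_o_mu_i (nu (f i)) (fib_rank i)).
Proof.
have fibE := fib_extend _ (compf_mumap_lift i) (compf_mumap_max i).
apply: elm_eq => [|j]; first exact: extmapE (compf_mumap_lift i) (compf_mumap_max i).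
have [->|jfi] := eqVneq j (f i).
  by rewrite dfwith_in compfib_mu_i_at [RHS]coeK // fibE eqxx addn1.
rewrite dfwith_out 1?eq_sym // compfib_mu_i_off // [RHS]coeK //.
by rewrite fibE eq_sym (negbTE jfi) addn0.
Qed.

Section BoxOfComposite.
Variable mu0 : ops O n.

Let h := compf (boxmap (const0 n)) (boxmap f).

Let h_lift x : h (lift ord_max x) = lift ord_max (compf (const0 n) f x).
Proof. by rewrite !compfE !boxmap_lift. Qed.

Let h_max : h ord_max = ord_max.
Proof. by rewrite compfE !boxmap_max. Qed.

Let enum_val_lift0 (y : 'I_(fib (boxmap (const0 n)) (lift ord_max ord0))) (x : 'I_n) :
  val y = val x -> enum_val y = lift ord_max x.
Proof.
move=> yx; rewrite (@enum_val_box_lift _ _ _ _ (boxmap_lift _) (boxmap_max _) _ _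
  (cast_ord (esym (fib_to1 _ ord0)) x)) // enum_val_to1.
by congr lift; apply: val_inj.
Qed.

Lemma compfib_box_lift :
  compfib (@op_comp k O) (eten (ebox1 (el_of mu0))) (eten (ebox1 (Elm nu))) (lift ord_max ord0)
  = coe _ (gam f mu0 nu).
Proof.
have em : m = fib h (lift ord_max ord0) by rewrite (fib_box h_lift h_max) liftK fib_to1.
have en : n = fib (boxmap (const0 n)) (lift ord_max ord0) by rewrite fib_boxmap liftK fib_to1.
rewrite /compfib /= liftK coeK ?fib_to1 //; symmetry.
apply: (@coe_op_comp _ _ _ _ _ _ em en f (fibmap _ (boxmap f) (lift ord_max ord0))).
  move=> a; apply: fibmap_eq; rewrite (@enum_val_lift0 _ (f a)) //.
  rewrite (@enum_val_box_lift _ _ _ _ h_lift h_max _ _ (cast_ord (esym (fib_to1 _ ord0)) a)) //.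
  by rewrite enum_val_to1 cast_ordKV boxmap_lift.
move=> b; rewrite /compnu (@enum_val_lift0 _ b) //= liftK.
by rewrite !coeK // fib_boxmap liftK.
Qed.

Lemma compfib_box_max :
  compfib (@op_comp k O) (eten (ebox1 (el_of mu0))) (eten (ebox1 (Elm nu))) ord_max
  = coe _ (op_id O).
Proof.
have em : 1%N = fib h ord_max by rewrite (fib_box h_lift h_max) unlift_none.
have en : 1%N = fib (boxmap (const0 n)) ord_max by rewrite fib_boxmap unlift_none.
rewrite /compfib /= unlift_none -[in RHS](op_comp_unitl (const0 1) (op_id O)); symmetry.
apply: (@coe_op_comp _ _ _ _ _ _ em en (const0 1) (fibmap (boxmap (const0 n)) (boxmap f) ord_max)).
  move=> a; apply: fibmap_eq.
  by rewrite (enum_val_box_max (boxmap_lift _)) (enum_val_box_max h_lift) boxmap_max.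
move=> b; rewrite /compnu (enum_val_box_max (boxmap_lift _)) /= unlift_none.
by rewrite !coeK // ?fib_to1 // fib_boxmap unlift_none.
Qed.

Lemma ebox1_op_comp :
  ebox1 (el_of (gam f mu0 nu)) = ecomp (ebox1 (el_of mu0)) (ebox1 (Elm nu)).
Proof.
apply: elm_eq => [|z].
  change (boxmap (const0 m) = h); apply/ffunP => x.
  case: (unliftP ord_max x) => [x'|] ->; last by rewrite boxmap_max h_max.
  by rewrite boxmap_lift h_lift !ffunE.
case: (unliftP ord_max z) => [z'|] ->.
  by rewrite [z']ord1 compfib_box_lift /= !coeK // ?fib_to1 // fib_boxmap liftK fib_to1.
by rewrite compfib_box_max /= !coeK // fib_boxmap unlift_none.
Qed.
End BoxOfComposite.
End Composites.

Section Representations.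
Variables (k : fieldType) (O : operad k) (F : rep O).
Local Notation ractF e := (@ract _ _ F _ _ e).

Lemma ract_linear m n (e : elm O m n) (a : k) u v :
  ractF e (a *: u + v) = a *: ractF e u + ractF e v.
Proof. by case: (rep_ax F) => H *; apply: H. Qed.

Lemma ract_comp m n p (e2 : elm O n p) (e1 : elm O m n) v :
  ractF (ecomp e2 e1) v = ractF e2 (ractF e1 v).
Proof. by case: (rep_ax F) => _ _ _ H; apply: H. Qed.

Lemma ract_dfwith_linear m n (f : {ffun 'I_m -> 'I_n}) (t : forall i, ops O (fib f i)) i w
    (a : k) x y :
  ractF (Elm (dfwith t (i := i) (a *: x + y))) w
  = a *: ractF (Elm (dfwith t (i := i) x)) w + ractF (Elm (dfwith t (i := i) y)) w.
Proof. by case: (rep_ax F) => _ H *; apply: H. Qed.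
End Representations.

Section LeibnizNaturality.
Variables (k : fieldType) (O : operad k) (mu : ops O 2) (F : rep O).
Variables (m n : nat) (f : {ffun 'I_m -> 'I_n}) (nu : forall i, ops O (fib f i)).
Variable v : robj F m.+1.
Local Notation ractF e := (@ract _ _ F _ _ e).

Lemma ract_elm_replace_sum i (I : finType) (x : I -> ops O (fib f i).+1) :
  ractF (elm_replace nu (\sum_(q : I) x q)) v = \sum_(q : I) ractF (elm_replace nu (x q)) v.
Proof.
rewrite /elm_replace (lin_sum (coe_linear _)).
pose A y := ractF (Elm (dfwith (fun j => coe (fib (extmap f i) j) (nu j)) (i := i) y)) v.
by apply: (@lin_sum _ _ _ A) => a y1 y2; apply: ract_dfwith_linear.
Qed.

Lemma val_fib_rank_enum_val i (q : 'I_(fib f i)) : val (fib_rank f (enum_val q)) = val q.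
Proof.
have fq : f (enum_val q) = i by apply/eqP; have := enum_valP q.
rewrite /fib_rank; move: (mem_fib_self f (enum_val q)); rewrite fq => fibq.
by rewrite enum_valK_in.
Qed.

Let T i (q : 'I_(fib f i)) := ractF (elm_replace nu (nu_o_mu_i mu (nu i) q)) v.

Let T_val i1 i (e : i1 = i) (q1 : 'I_(fib f i1)) (q : 'I_(fib f i)) :
  val q1 = val q -> T q1 = T q.
Proof. by subst i1 => /val_inj ->. Qed.

Lemma mutilde_ebox1_Elm : (forall i, leibniz_at mu (nu i)) ->
  mutilde mu (ractF (ebox1 (Elm nu)) v) = ractF (Elm nu) (mutilde mu v).
Proof.
move=> leib; rewrite /mutilde (lin_sum (@ract_linear _ _ _ _ _ _)).
transitivity (\sum_(i < n) \sum_(q < fib f i) T q).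
  apply: eq_bigr => i _.
  by rewrite -ract_comp ecomp_mu_i_ebox1 ((leibniz_atE _ _).1 (leib i)) ract_elm_replace_sum.
symmetry; under eq_bigr => i' _ do rewrite -ract_comp ecomp_Elm_mu_i.
rewrite (partition_big (fun i' => f i') predT) //=; apply: eq_bigr => i _.
rewrite (big_enum_val (A := [pred x : 'I_m | f x == i])) /=; apply: eq_bigr => q _.
apply: T_val; last exact: val_fib_rank_enum_val.
by apply/eqP; have := enum_valP q.
Qed.
End LeibnizNaturality.

Section HomRepresentation.
Variables (k : fieldType) (O : operad k) (N : nat).

Record linhom p := LinHom {
  linhom_fun :> ops O p -> ops O N;
  linhom_linear : forall (a : k) x y, linhom_fun (a *: x + y) = a *: linhom_fun x + linhom_fun y }.

Lemma linhom_eq p (g g' : linhom p) : g =1 g' -> g = g'.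
Proof.
case: g g' => g lg [g' lg'] /= /funext gg'; subst g'.
by congr LinHom; apply: Prop_irrelevance.
Qed.

HB.instance Definition _ p := gen_eqMixin (linhom p).
HB.instance Definition _ p := gen_choiceMixin (linhom p).

Section Operations.
Variable p : nat.

Program Definition linhom0 : linhom p := @LinHom p (fun => 0) _.
Next Obligation. by rewrite scaler0 addr0. Qed.

Program Definition linhomD (g g' : linhom p) : linhom p := @LinHom p (fun y => g y + g' y) _.
Next Obligation. by rewrite !linhom_linear scalerDr addrACA. Qed.

Program Definition linhomN (g : linhom p) : linhom p := @LinHom p (fun y => - g y) _.
Next Obligation. by rewrite linhom_linear opprD scalerN. Qed.

Program Definition linhomZ (a : k) (g : linhom p) : linhom p := @LinHom p (fun y => a *: g y) _.
Next Obligation. by rewrite linhom_linear scalerDr !scalerA mulrC. Qed.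

Lemma linhomDA : associative linhomD.
Proof. by move=> g g' g''; apply: linhom_eq => y /=; rewrite addrA. Qed.

Lemma linhomDC : commutative linhomD.
Proof. by move=> g g'; apply: linhom_eq => y /=; rewrite addrC. Qed.

Lemma linhom0D : left_id linhom0 linhomD.
Proof. by move=> g; apply: linhom_eq => y /=; rewrite add0r. Qed.

Lemma linhomNK : left_inverse linhom0 linhomN linhomD.
Proof. by move=> g; apply: linhom_eq => y /=; rewrite addNr. Qed.

HB.instance Definition _ :=
  GRing.isZmodule.Build (linhom p) linhomDA linhomDC linhom0D linhomNK.

Lemma linhomZA a b (g : linhom p) : linhomZ a (linhomZ b g) = linhomZ (a * b) g.
Proof. by apply: linhom_eq => y /=; rewrite scalerA. Qed.

Lemma linhomZ1 : left_id 1 linhomZ.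
Proof. by move=> g; apply: linhom_eq => y /=; rewrite scale1r. Qed.

Lemma linhomZDr : right_distributive linhomZ +%R.
Proof. by move=> a g g'; apply: linhom_eq => y /=; rewrite scalerDr. Qed.

Lemma linhomZDl (g : linhom p) : {morph linhomZ^~ g : a b / a + b}.
Proof. by move=> a b; apply: linhom_eq => y /=; rewrite scalerDl. Qed.

HB.instance Definition _ :=
  GRing.Zmodule_isLmodule.Build k (linhom p) linhomZA linhomZ1 linhomZDr linhomZDl.

Lemma linhom_sum (I : finType) (G : I -> linhom p) y :
  (\sum_(i : I) G i) y = \sum_(i : I) G i y.
Proof. exact: (big_morph (fun g : linhom p => g y)). Qed.
End Operations.

Program Definition linhom_act m n (e : elm O m n) (g : linhom m) : linhom n :=
  @LinHom n (fun y => g (ocomp y e)) _.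
Next Obligation. by rewrite ocomp_linear linhom_linear. Qed.

Lemma linhom_act_axioms : rep_axioms linhom_act.
Proof.
split.
- by move=> m n e a g g'; apply: linhom_eq.
- move=> m n f nu i a x y g; apply: linhom_eq => z /=.
  by rewrite !ocomp_Elm op_comp_linearr linhom_linear.
- by move=> n g; apply: linhom_eq => z /=; rewrite ocomp_Elm op_comp_unitr.
- by move=> m n p e2 e1 g; apply: linhom_eq => z /=; rewrite ocompA.
Qed.

Definition linhom_rep : rep O :=
  @Rep k O (fun p => linhom p : lmodType k) linhom_act linhom_act_axioms.

Program Definition linhom_id : linhom N := @LinHom N id _.
End HomRepresentation.

Section Leibniz.
Variables (k : fieldType) (O : operad k) (mu : ops O 2).
Local Notation gam f := (@op_comp k O _ _ f).

Lemma ocomp_id_mu_i : ocomp (op_id O) (mu_i mu (ord0 : 'I_1)) = mu.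
Proof.
rewrite ocomp_Elm -[RHS](op_comp_unitl (mumap (ord0 : 'I_1)) mu).
by congr (gam _ _ _); apply: functional_extensionality_dep => j; rewrite [j]ord1.
Qed.

Lemma natural_leibniz : mutilde_natural mu -> leibniz mu.
Proof.
move=> [natF _] n nu; apply/leibniz_atE.
have := natF (linhom_rep O n.+1) n 1 (el_of nu) (linhom_id O n.+1).
move/(congr1 (fun g : linhom O n.+1 1 => g (op_id O))).
by rewrite /mutilde /= !linhom_sum big_ord1 /= ocomp_id_mu_i ocomp_el_of.
Qed.

Lemma leibniz_natural : leibniz mu -> mutilde_natural mu.
Proof.
move=> leib; split=> [F m n [f nu] v | F G al [al_lin al_nat] n v].
  by apply: mutilde_ebox1_Elm => i; apply: leib.
rewrite /mutilde (lin_sum (al_lin n)); apply: eq_bigr => i _; exact: al_nat.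
Qed.

Lemma ebox1_el_of_dfwith n (z : ops O n) :
  eten (ebox1 (el_of z))
  = dfwith (eten (ebox1 (el_of (0 : ops O n)))) (i := lift ord_max ord0) (coe _ z).
Proof.
apply: functional_extensionality_dep => j; case: (unliftP ord_max j) => [j'|] ->.
  by rewrite [j']ord1 dfwith_in /= liftK coeK // fib_to1.
by rewrite dfwith_out ?lift_eqF //= unlift_none.
Qed.

Lemma mu_o_box_linear n (a : k) (x y : ops O n) :
  mu_o_box mu (a *: x + y) = a *: mu_o_box mu x + mu_o_box mu y.
Proof.
rewrite /mu_o_box !ocompE (ebox1_el_of_dfwith (a *: x + y)) coe_linear op_comp_linearr.
by rewrite -!ebox1_el_of_dfwith.
Qed.

Lemma leibniz_at_linear n (a : k) (x y : ops O n) :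
  leibniz_at mu x -> leibniz_at mu y -> leibniz_at mu (a *: x + y).
Proof.
move=> /leibniz_atE lx /leibniz_atE ly; apply/leibniz_atE.
rewrite mu_o_box_linear lx ly scaler_sumr -big_split; apply: eq_bigr => i _.
by rewrite /nu_o_mu_i ocomp_linear.
Qed.

Lemma leibniz_at0 n : leibniz_at mu (0 : ops O n).
Proof.
apply/leibniz_atE; rewrite (lin0 (@mu_o_box_linear n)) big1 // => i _.
exact: lin0 (fun a x y => ocomp_linear _ a x y).
Qed.

Lemma leibniz_at_id : leibniz_at mu (op_id O).
Proof.
apply/leibniz_atE; rewrite big_ord1 /nu_o_mu_i ocomp_id_mu_i /mu_o_box ocompE.
rewrite -[X in _ = X](op_comp_unitr mu) -[LHS]coe_id.
apply: (@coe_op_comp_dom _ _ _ _ _ (erefl 2%N)).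
  move=> a; rewrite cast_ord_id ffunE; case: (unliftP ord_max a) => [a'|] ->.
    by rewrite /= boxmap_lift ffunE [a']ord1.
  by rewrite ffunE unlift_none.
move=> b; case: (unliftP ord_max b) => [b'|] ->.
  by rewrite /= liftK !coeK // ?fib_boxmap ?liftK ?fib_to1.
by rewrite /ebox1 /= unlift_none coeK // fib_boxmap unlift_none.
Qed.

Lemma leibniz_at_op_comp m n (f : {ffun 'I_m -> 'I_n}) (mu0 : ops O n)
    (nu : forall i, ops O (fib f i)) :
  leibniz_at mu mu0 -> (forall i, leibniz_at mu (nu i)) -> leibniz_at mu (gam f mu0 nu).
Proof.
move=> /leibniz_atE l0 lnu; apply/leibniz_atE.
pose psi := ract (r := linhom_rep O m.+1) (ebox1 (Elm nu)) (linhom_id O m.+1).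
transitivity (psi (mu_o_box mu mu0)).
  by rewrite /mu_o_box ebox1_op_comp ocompA.
rewrite l0 (lin_sum (linhom_linear psi)).
transitivity (mutilde mu psi mu0); first by rewrite /mutilde linhom_sum.
by rewrite mutilde_ebox1_Elm //= /mutilde linhom_sum ocomp_Elm.
Qed.
End Leibniz.

Lemma leibniz_generated (k : fieldType) (O : operad k) (mu : ops O 2)
    (S : forall n, ops O n -> Prop) :
  generates S -> (forall n (nu : ops O n), S n nu -> leibniz_at mu nu) -> leibniz mu.
Proof.
move=> genS leibS n nu; apply: (genS (fun n x => leibniz_at mu x)) => //.
- exact: leibniz_at_id.
- by move=> p; apply: leibniz_at0.
- by move=> p a x y; apply: leibniz_at_linear.
- by move=> p q f mu0 nu'; apply: leibniz_at_op_comp.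
Qed.

Theorem theorem3p5 (k : fieldType) (O : operad k) (mu : ops O 2) :
  (mutilde_natural mu <-> leibniz mu) /\
  (forall S : forall n, ops O n -> Prop, generates S ->
     (forall n (nu : ops O n), S n nu -> leibniz_at mu nu) -> leibniz mu).
Proof.
split; last exact: leibniz_generated.
by split; [apply: natural_leibniz | apply: leibniz_natural].
Qed.
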